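(* Let $\varepsilon>0$, $0<\kappa<1$, $M\ge0$, and let $\{a_n\}_{n=1}^\infty$, $\{b_n\}_{n=1}^\infty$ be sequences of positive integers with $\{a_n\}$ non-decreasing, $\limsup_{n\to\infty}a_n^{(M+2)^{-n}}=\infty$, and $a_n\ge n^{1+\varepsilon}$, $b_n\le 2^{(\log_2 a_n)^\kappa}$ for all sufficiently large $n$. Let $k$ be a positive integer. Then for infinitely many $N>k$, \[a_N>\Big(1+\frac1{N^2}\Big)^{(M+2)^N}\Big(\max_{k\le n<N}a_n^{(M+2)^{-n}}\Big)^{(M+2)^N},\] and for every such $N$ we further have \[a_N>\Big(1+\frac1{N^2}\Big)^{(M+2)^N}\prod_{n=k}^{N-1}a_n^{M+1}.\] *)

From Stdlib Require Import Reals List.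
From Coquelicot Require Import Coquelicot.
Open Scope R_scope.

Definition log2 (x : R) : R := ln x / ln 2.

(* max_{k <= n < N} f n  (values used here are positive; default 0 for empty range) *)
Definition max_range (f : nat -> R) (k N : nat) : R :=
  fold_right Rmax 0 (map f (seq k (N - k))).

Definition prod_range (f : nat -> R) (k N : nat) : R :=
  fold_right Rmult 1 (map f (seq k (N - k))).

(** Write [c n = a_n ^ ((M+2)^-n)].  If the first inequality failed for all
    large [N], then eventually [c N <= (1 + 1/N^2) max_{k<=n<N} c n]; since the
    product of the factors [1 + 1/N^2] converges, the [c n] would stay bounded,
    contradicting [limsup c n = oo].  For the second inequality, with [X] the
    maximum of the [c n], each factor satisfies
    [a_n^(M+1) = c n ^ ((M+2)^(n+1) - (M+2)^n) <= X ^ ((M+2)^(n+1) - (M+2)^n)],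
    and the exponents telescope to at most [(M+2)^N]. *)

From Stdlib Require Import Reals List.
From Coquelicot Require Import Coquelicot.
From Stdlib Require Import Lra Lia Classical.
Open Scope R_scope.

Lemma max_range_ge0 f k N : 0 <= max_range f k N.
Proof.
  unfold max_range; induction (map f (seq k (N - k))) as [|x l IH]; simpl.
  - lra.
  - eapply Rle_trans; [exact IH|apply Rmax_r].
Qed.

Lemma max_range_ge f k N n : (k <= n < N)%nat -> f n <= max_range f k N.
Proof.
  intros Hn; unfold max_range.
  assert (Hin : In (f n) (map f (seq k (N - k)))) by (apply in_map, in_seq; lia).
  induction (map f (seq k (N - k))) as [|x l IH]; simpl in *; [tauto|].
  destruct Hin as [<-|Hin]; [apply Rmax_l|].
  eapply Rle_trans; [exact (IH Hin)|apply Rmax_r].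
Qed.

Lemma max_range_le f k N B :
  0 <= B -> (forall n, (k <= n < N)%nat -> f n <= B) -> max_range f k N <= B.
Proof.
  intros HB Hf; unfold max_range.
  assert (Hl : forall x, In x (map f (seq k (N - k))) -> x <= B).
  { intros x Hx; apply in_map_iff in Hx as [n [<- Hn]].
    apply in_seq in Hn; apply Hf; lia. }
  induction (map f (seq k (N - k))) as [|x l IH]; simpl in *; [exact HB|].
  apply Rmax_lub; auto.
Qed.

Lemma prod_range_le_Rpower_telescope (f e : nat -> R) (X : R) k N :
  (k <= N)%nat ->
  (forall n, (k <= n < N)%nat -> 0 <= f n <= Rpower X (e (S n) - e n)) ->
  prod_range f k N <= Rpower X (e N - e k).
Proof.
  intros HkN Hf; unfold prod_range.
  assert (Htel : forall d j,
            (forall n, (j <= n < j + d)%nat -> 0 <= f n <= Rpower X (e (S n) - e n)) ->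
            fold_right Rmult 1 (map f (seq j d)) <= Rpower X (e (j + d)%nat - e j)).
  { induction d as [|d IH]; intros j Hfj; simpl.
    - rewrite Nat.add_0_r, Rminus_diag; unfold Rpower; rewrite Rmult_0_l, exp_0; lra.
    - replace (e (j + S d)%nat - e j)
        with ((e (S j) - e j) + (e (S j + d)%nat - e (S j)))
        by (replace (S j + d)%nat with (j + S d)%nat by lia; ring).
      rewrite Rpower_plus.
      destruct (Hfj j ltac:(lia)) as [Hfj0 Hfjle].
      eapply Rle_trans.
      + apply Rmult_le_compat_l; [exact Hfj0|apply IH; intros n Hn; apply Hfj; lia].
      + apply Rmult_le_compat_r; [left; apply exp_pos|exact Hfjle]. }
  replace (e N) with (e (k + (N - k))%nat) by (f_equal; lia).
  apply Htel; intros n Hn; apply Hf; lia.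
Qed.

Lemma prod_range_Rpower_le_max_root (u : nat -> R) (p : R) k N :
  0 <= p -> (k < N)%nat -> (forall n, (k <= n < N)%nat -> 1 <= u n) ->
  prod_range (fun n => Rpower (u n) p) k N
  <= Rpower (max_range (fun n => Rpower (u n) (/ (p + 1) ^ n)) k N) ((p + 1) ^ N).
Proof.
  intros Hp HkN Hu.
  set (X := max_range _ k N).
  assert (Hqn : forall n, 0 < (p + 1) ^ n) by (intros n; apply pow_lt; lra).
  assert (Hroot : forall n, (k <= n < N)%nat -> Rpower (u n) (/ (p + 1) ^ n) <= X)
    by (intros n Hn; apply (max_range_ge (fun n => Rpower (u n) (/ (p + 1) ^ n))), Hn).
  assert (HX : 1 <= X).
  { eapply Rle_trans; [|apply (Hroot k); lia].
    pose proof (Hu k ltac:(lia)) as Huk.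
    apply Rle_trans with (Rpower (u k) 0); [rewrite Rpower_O; lra|].
    apply Rle_Rpower; [exact Huk|left; apply Rinv_0_lt_compat, Hqn]. }
  eapply Rle_trans.
  - apply (prod_range_le_Rpower_telescope _ (fun n => (p + 1) ^ n)); [lia|].
    intros n Hn; split; [left; apply exp_pos|].
    assert (Hun : u n = Rpower (Rpower (u n) (/ (p + 1) ^ n)) ((p + 1) ^ n)).
    { rewrite Rpower_mult, Rinv_l, Rpower_1; [reflexivity| |].
      - specialize (Hu n Hn); lra.
      - apply Rgt_not_eq, Hqn. }
    rewrite Hun at 1; rewrite Rpower_mult.
    replace ((p + 1) ^ S n - (p + 1) ^ n) with ((p + 1) ^ n * p) by (simpl; ring).
    apply Rle_Rpower_l; [apply Rmult_le_pos; [left; apply Hqn|exact Hp]|].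
    split; [apply exp_pos|apply Hroot, Hn].
  - apply Rle_Rpower; [exact HX|].
    pose proof (Hqn k); lra.
Qed.

(* [(1 + 1/N^2) G N <= G (N+1)] for [G N = 1 - 1/(N-1)]: the partial products
   of [1 + 1/N^2] stay below a constant multiple of [G], which increases to 1. *)
Lemma damping_step x :
  3 <= x -> (1 + / x ^ 2) * (1 - / (x - 1)) <= 1 - / x.
Proof.
  intros Hx.
  assert (E : 1 - / x - (1 + / x ^ 2) * (1 - / (x - 1)) = 2 / (x ^ 2 * (x - 1)))
    by (field; lra).
  assert (0 < 2 / (x ^ 2 * (x - 1))).
  { apply Rdiv_lt_0_compat; [lra|]. apply Rmult_lt_0_compat; [nra|lra]. }
  lra.
Qed.

Lemma bounded_of_slow_max_growth (c : nat -> R) (k N1 : nat) :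
  (3 <= N1)%nat -> (k < N1)%nat ->
  (forall N, (N1 <= N)%nat -> c N <= (1 + / INR N ^ 2) * max_range c k N) ->
  exists B, forall n, (N1 <= n)%nat -> c n <= B.
Proof.
  intros HN1 HkN1 Hslow.
  set (G := fun N : nat => 1 - / (INR N - 1)).
  assert (HG : forall N, (N1 <= N)%nat ->
            0 < G N <= 1 /\ G N <= G (S N) /\ (1 + / INR N ^ 2) * G N <= G (S N)).
  { intros N HN.
    assert (H3 : 3 <= INR N) by (replace 3 with (INR 3) by (simpl; lra); apply le_INR; lia).
    unfold G; rewrite S_INR; replace (INR N + 1 - 1) with (INR N) by ring.
    assert (0 < / (INR N - 1) <= / 2)
      by (split; [apply Rinv_0_lt_compat|apply Rinv_le_contravar]; lra).
    assert (/ INR N <= / (INR N - 1)) by (apply Rinv_le_contravar; lra).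
    assert (0 < / INR N) by (apply Rinv_0_lt_compat; lra).
    pose proof (damping_step (INR N) H3).
    repeat split; lra. }
  set (B := max_range c k N1 / G N1).
  assert (HB : 0 <= B).
  { apply Rmult_le_pos; [apply max_range_ge0|].
    left; apply Rinv_0_lt_compat, HG; lia. }
  assert (Hinv : forall N, (N1 <= N)%nat -> max_range c k N <= B * G N).
  { intros N HN; induction HN as [|N HN IH].
    - right; unfold B; field; apply Rgt_not_eq, HG; lia.
    - destruct (HG N HN) as [[HG0 _] [HGmono HGstep]].
      apply max_range_le; [apply Rmult_le_pos; lra|].
      intros n Hn; destruct (Nat.eq_dec n N) as [->|Hne].
      + eapply Rle_trans; [exact (Hslow N HN)|].
        assert (0 < / INR N ^ 2) by (apply Rinv_0_lt_compat, pow_lt, lt_0_INR; lia).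
        eapply Rle_trans; [apply Rmult_le_compat_l; [lra|exact IH]|].
        rewrite Rmult_comm, Rmult_assoc, (Rmult_comm (G N)).
        apply Rmult_le_compat_l; assumption.
      + eapply Rle_trans; [apply max_range_ge with (k := k) (N := N); lia|].
        eapply Rle_trans; [exact IH|apply Rmult_le_compat_l; assumption]. }
  exists B; intros n Hn.
  eapply Rle_trans; [apply max_range_ge with (k := k) (N := S n); lia|].
  eapply Rle_trans; [apply Hinv; lia|].
  rewrite <- (Rmult_1_r B) at 2; apply Rmult_le_compat_l; [exact HB|apply HG; lia].
Qed.

Lemma LimSup_seq_ne_p_infty_of_bounded (u : nat -> R) (B : R) (N : nat) :
  (forall n, (N <= n)%nat -> u n <= B) -> LimSup_seq u <> p_infty.
Proof.
  intros HB Hu.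
  assert (Hle : Rbar_le (LimSup_seq u) (LimSup_seq (fun _ => B)))
    by (apply LimSup_le; exists N; exact HB).
  rewrite Hu, LimSup_seq_const in Hle; exact Hle.
Qed.

Lemma Rpower_inv_le_of_not_gt (x A X y : R) :
  0 < x -> 0 < A -> 0 < X -> 0 < y ->
  ~ x > Rpower A y * Rpower X y -> Rpower x (/ y) <= A * X.
Proof.
  intros Hx HA HX Hy Hngt.
  assert (HAX : 0 < A * X) by (apply Rmult_lt_0_compat; assumption).
  rewrite Rpower_mult_distr in Hngt by assumption.
  rewrite <- (Rpower_1 (A * X) HAX), <- (Rinv_r y), <- Rpower_mult by lra.
  apply Rle_Rpower_l; [left; apply Rinv_0_lt_compat, Hy|].
  split; [exact Hx|apply Rnot_lt_le, Hngt].
Qed.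

Theorem corollary1 (eps kappa M : R) (a b : nat -> nat) (k : nat)
  (Heps : 0 < eps) (Hkappa0 : 0 < kappa) (Hkappa1 : kappa < 1) (HM : 0 <= M)
  (Hapos : forall n, (1 <= n)%nat -> (0 < a n)%nat)
  (Hbpos : forall n, (1 <= n)%nat -> (0 < b n)%nat)
  (Hmono : forall n m, (1 <= n)%nat -> (n <= m)%nat -> (a n <= a m)%nat)
  (Hlimsup : LimSup_seq (fun n => Rpower (INR (a n)) (/ (M + 2) ^ n)) = p_infty)
  (Hgrowth : exists n0, forall n, (n0 <= n)%nat ->
      Rpower (INR n) (1 + eps) <= INR (a n) /\
      INR (b n) <= Rpower 2 (Rpower (log2 (INR (a n))) kappa))
  (Hk : (1 <= k)%nat) :
  let P1 := fun N : nat =>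
    INR (a N) > Rpower (1 + / INR N ^ 2) ((M + 2) ^ N) *
      Rpower (max_range (fun n => Rpower (INR (a n)) (/ (M + 2) ^ n)) k N) ((M + 2) ^ N) in
  (forall m : nat, exists N : nat, (m < N)%nat /\ (k < N)%nat /\ P1 N) /\
  (forall N : nat, (k < N)%nat -> P1 N ->
     INR (a N) > Rpower (1 + / INR N ^ 2) ((M + 2) ^ N) *
       prod_range (fun n => Rpower (INR (a n)) (M + 1)) k N).
Proof.
  intros P1.
  set (c := fun n => Rpower (INR (a n)) (/ (M + 2) ^ n)) in *.
  assert (Ha1 : forall n, (k <= n)%nat -> 1 <= INR (a n))
    by (intros n Hn; apply (le_INR 1), Hapos; lia).
  split.
  - intros m; apply NNPP; intros Hno.
    set (N1 := S (Nat.max m (Nat.max k 2))).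
    assert (Hslow : forall N, (N1 <= N)%nat -> c N <= (1 + / INR N ^ 2) * max_range c k N).
    { intros N HN.
      apply Rpower_inv_le_of_not_gt.
      - specialize (Ha1 N ltac:(lia)); lra.
      - assert (0 < / INR N ^ 2) by (apply Rinv_0_lt_compat, pow_lt, lt_0_INR; lia); lra.
      - apply Rlt_le_trans with (c k); [apply exp_pos|apply max_range_ge; lia].
      - apply pow_lt; lra.
      - intros HP1; apply Hno; exists N; repeat split; [lia|lia|exact HP1]. }
    destruct (bounded_of_slow_max_growth c k N1 ltac:(lia) ltac:(lia) Hslow) as [B HB].
    exact (LimSup_seq_ne_p_infty_of_bounded c B N1 HB Hlimsup).
  - intros N HN HP1.
    eapply Rle_lt_trans; [|exact HP1].
    apply Rmult_le_compat_l; [left; apply exp_pos|].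
    unfold c; replace (M + 2) with (M + 1 + 1) by ring.
    apply prod_range_Rpower_le_max_root; [lra|exact HN|].
    intros n Hn; apply Ha1; lia.
Qed.
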